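(* Let $i\ge 2$ and let $c_0,\dots,c_{i-1}$ be the vertices of a cycle, each with a positive weight $w(c_j)$. Run the following procedure (BalanceInCycle): initialize $b_{OPT}\gets 0$, a queue $Q_1$ empty and a queue $Q_2$ containing $c_0,c_1,\dots,c_{i-1}$ in this order (head $c_0$). Repeat the following iteration until $c_0$ becomes the head of $Q_1$ for the second time: update $b_{OPT}\gets\max\{b_{OPT},\min(w(Q_1),w(Q_2))\}$; then, if $w(Q_1)>w(Q_2)$, dequeue the head of $Q_1$ and append it to the tail of $Q_2$, otherwise dequeue the head of $Q_2$ and append it to the tail of $Q_1$. Then this procedure terminates after $O(i)$ steps.
   Context: $w(Q)$ denotes the sum of the weights of the elements currently in queue $Q$. Queues are FIFO: elements are appended at the tail and removed at the head. (In the paper's application, the $c_j$ are the vertices of a cycle in the cactus representation of all minimum cuts of a graph, and $w(c_j)$ is the number of original graph vertices in the sub-cactus hanging off $c_j$.) *)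

From mathcomp Require Import all_boot all_order all_algebra.
Set Implicit Arguments. Unset Strict Implicit. Unset Printing Implicit Defensive.
Import Order.TTheory GRing.Theory Num.Theory.
Local Open Scope ring_scope.

(* Cycle vertices c_0, ..., c_{i-1} are represented by the naturals 0..i-1;
   a weight function is w : nat -> R (only its values on 0..i-1 matter). *)

(* w(Q): total weight of the elements currently in queue Q
   (a queue is a seq, head = first element, tail = last element). *)
Definition wQ (R : realDomainType) (w : nat -> R) (q : seq nat) : R :=
  \sum_(x <- q) w x.

Definition bic_state (R : realDomainType) := (R * seq nat * seq nat)%type.

Definition bic_step (R : realDomainType) (w : nat -> R) (s : bic_state R)
  : bic_state R :=
  let: (b, q1, q2) := s in
  let b' := Num.max b (Num.min (wQ w q1) (wQ w q2)) in
  if wQ w q2 < wQ w q1 then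
    match q1 with
    | x :: t => (b', t, rcons q2 x)
    | [::] => (b', q1, q2)
    end
  else
    match q2 with
    | x :: t => (b', rcons q1 x, t)
    | [::] => (b', q1, q2)
    end.

Definition bic_init (R : realDomainType) (i : nat) : bic_state R :=
  (0, [::], iota 0 i).

Definition bic_iter (R : realDomainType) (w : nat -> R) (i k : nat) : bic_state R :=
  iter k (bic_step w) (bic_init R i).

Definition headQ1 (R : realDomainType) (s : bic_state R) : option nat :=
  ohead s.1.2.

(* c_0 becomes the head of Q1 at (the end of) iteration k >= 1:
   it is the head of Q1 after k iterations but was not after k-1. *)
Definition c0_becomes_head (R : realDomainType) (w : nat -> R) (i k : nat) : bool :=
  (headQ1 (bic_iter w i k) == Some 0%N) &&
  (headQ1 (bic_iter w i k.-1) != Some 0%N).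

(* The loop stops after exactly T iterations iff at iteration T, c_0 becomes
   the head of Q1 for the second time. *)
Definition bic_stops_after (R : realDomainType) (w : nat -> R) (i T : nat) : Prop :=
  c0_becomes_head w i T /\
  count (c0_becomes_head w i) (iota 1 T) = 2%N.

From mathcomp Require Import all_boot all_order all_algebra.
From mathcomp Require Import zify.
Import Order.TTheory GRing.Theory Num.Theory.

(* After n iterations Q1 is the cyclic arc c_a, ..., c_(a+k-1) and Q2 the
   complementary arc, with 2a + k = n: each iteration either lengthens Q1 or
   advances its head.  Positive weights forbid dequeuing from an empty Q1 and
   force a dequeue from Q1 when Q2 is empty, so 0 <= k <= i, and a, which grows
   by at most one per step, reaches i within 3i steps.  c_0 heads Q1 exactly when
   k > 0 and i divides a: this first happens at step 1 and stays so while a = 0;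
   since i >= 2, c_0 has left the head before a first reaches i with k > 0,
   which is the second time c_0 becomes the head. *)

Lemma nat_discrete_ivt (f : nat -> nat) (m N : nat) :
  (forall n, f n.+1 <= (f n).+1) -> f 0 <= m <= f N -> exists n, f n = m.
Proof.
move=> f_step; elim: N => [|N IHN] /andP [f0_le le_fN]; first by exists 0; lia.
have [le_mfN | lt_fNm] := leqP m (f N); first by apply: IHN; rewrite f0_le.
by exists N.+1; have := f_step N; lia.
Qed.

Lemma count_rising_edges (p : nat -> bool) (T : nat) :
  1 < T -> ~~ p 0 -> p 1 -> p T -> ~~ p T.-1 ->
  (forall m, 1 < m < T -> p m -> p m.-1) ->
  count (fun m => p m && ~~ p m.-1) (iota 1 T) = 2.
Proof.
case: T => [|[|n]] // _ np0 p1 pT npT1 no_rise.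
rewrite -(addn1 n.+1) iotaD /= count_cat /= -[1 + n.+1]/n.+2 -[0 + n.+1]/n.+1.
rewrite p1 np0 pT npT1 (eq_in_count (a2 := pred0)) ?count_pred0 // => m.
rewrite mem_iota => /andP [m_gt1 m_lt] /=.
by case: (p m) (no_rise m) => //= ->; rewrite ?m_gt1.
Qed.

Section BalanceInCycle.

Variables (R : realDomainType) (i : nat) (w : nat -> R).
Hypothesis i_gt0 : 0 < i.
Hypothesis w_gt0 : forall j, j < i -> (0 < w j)%R.

Definition arc (a n : nat) : seq nat := [seq j %% i | j <- iota a n].

Lemma arc_rcons a n : rcons (arc a n) ((a + n) %% i) = arc a n.+1.
Proof. by rewrite -cats1 /arc -addn1 iotaD map_cat. Qed.

Lemma arc_cons a n : arc a n.+1 = a %% i :: arc a.+1 n.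
Proof. by []. Qed.

Lemma wQ_arc0 a : wQ w (arc a 0) = 0%R.
Proof. exact: big_nil. Qed.

Lemma wQ_arc_ge0 a n : (0 <= wQ w (arc a n))%R.
Proof. rewrite /wQ big_map; apply: sumr_ge0 => j _; exact/ltW/w_gt0/ltn_pmod. Qed.

Lemma wQ_arc_gt0 a n : 0 < n -> (0 < wQ w (arc a n))%R.
Proof.
case: n => // n _; rewrite [arc a n.+1]/arc /= /wQ big_cons.
by apply: ltr_wpDr; [exact: wQ_arc_ge0 | exact/w_gt0/ltn_pmod].
Qed.

Definition moves_from_Q1 (a k : nat) : bool :=
  (wQ w (arc (a + k) (i - k)) < wQ w (arc a k))%R.

Lemma moves_from_Q1_empty a : moves_from_Q1 a 0 = false.
Proof. by rewrite /moves_from_Q1 wQ_arc0 ltNge wQ_arc_ge0. Qed.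

Lemma moves_from_Q1_full a : moves_from_Q1 a i.
Proof. by rewrite /moves_from_Q1 subnn wQ_arc0 wQ_arc_gt0. Qed.

Definition cut_step (s : nat * nat) : nat * nat :=
  let: (a, k) := s in if moves_from_Q1 a k then (a.+1, k.-1) else (a, k.+1).

Definition cut (n : nat) : nat * nat := iter n cut_step (0, 0).

Definition q1_start (n : nat) : nat := (cut n).1.

Definition q1_size (n : nat) : nat := (cut n).2.

Lemma cut_invariant n : 2 * q1_start n + q1_size n = n /\ q1_size n <= i.
Proof.
rewrite /q1_start /q1_size; elim: n => [|n]; first by split.
rewrite /cut iterS -/(cut n); case: (cut n) => a k /= [sum_n k_le].
have [k0 | k_gt0] := posnP k; first by rewrite k0 moves_from_Q1_empty /=; lia.
have [k_lt | k_ge] := ltnP k i; first by case: ifP => _ /=; lia.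
have k_eq : k = i by lia.
by rewrite k_eq moves_from_Q1_full /=; lia.
Qed.

Lemma q1_start_step n : q1_start n <= q1_start n.+1 <= (q1_start n).+1.
Proof.
by rewrite /q1_start /cut iterS -/(cut n); case: (cut n) => a k /=; case: ifP => _ /=; lia.
Qed.

Lemma q1_start_mono : {homo q1_start : m n / m <= n}.
Proof. by apply: homo_leq leqnn leq_trans _ => n; case/andP: (q1_start_step n). Qed.

Lemma cut_empty_step n : q1_size n = 0 -> cut n.+1 = (q1_start n, 1).
Proof.
rewrite /q1_start /q1_size /cut iterS -/(cut n).
by case: (cut n) => a k /= ->; rewrite moves_from_Q1_empty.
Qed.

Definition cut_queues (s : nat * nat) : seq nat * seq nat :=
  (arc s.1 s.2, arc (s.1 + s.2) (i - s.2)).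

Definition queues (st : bic_state R) : seq nat * seq nat := (st.1.2, st.2).

Lemma queues_bic_step st a k : k <= i -> queues st = cut_queues (a, k) ->
  queues (bic_step w st) = cut_queues (cut_step (a, k)).
Proof.
case: st => [[b q1] q2] k_le [/= -> ->].
rewrite /bic_step /cut_step -/(moves_from_Q1 a k) /queues /cut_queues.
case: ifP => moves.
- case: k k_le moves => [|k] k_le moves; first by rewrite moves_from_Q1_empty in moves.
  rewrite arc_cons /= (_ : i - k = (i - k.+1).+1); last by lia.
  rewrite -arc_rcons addSnnS (_ : a + k.+1 + (i - k.+1) = a + i); last by lia.
  by rewrite modnDr.
- have [k_lt | k_ge] := ltnP k i; last first.
    have k_eq : k = i by lia.
    by rewrite k_eq moves_from_Q1_full in moves.
  rewrite (_ : i - k = (i - k.+1).+1); last by lia.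
  by rewrite [arc (a + k) _]arc_cons /= arc_rcons addnS.
Qed.

Lemma queues_bic_iter n : queues (bic_iter w i n) = cut_queues (cut n).
Proof.
elim: n => [|n IHn].
  rewrite /queues /cut_queues /= subn0 [arc 0 i]map_id_in // => j.
  by rewrite mem_iota => /andP [_ /modn_small].
rewrite /bic_iter iterS -/(bic_iter w i n) /cut iterS -/(cut n).
move: IHn (proj2 (cut_invariant n)); rewrite /q1_size; case: (cut n) => a k IHn k_le.
exact: queues_bic_step.
Qed.

Definition c0_at_head (n : nat) : bool := (0 < q1_size n) && (i %| q1_start n).

Lemma headQ1_bic_iter n : (headQ1 (bic_iter w i n) == Some 0) = c0_at_head n.
Proof.
have := queues_bic_iter n; rewrite /headQ1 /queues /c0_at_head /q1_size /q1_start.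
by case: (bic_iter w i n) => [[b q1] q2]; case: (cut n) => a [|k] [/= -> _].
Qed.

Lemma c0_becomes_headE n : c0_becomes_head w i n = c0_at_head n && ~~ c0_at_head n.-1.
Proof. by rewrite /c0_becomes_head !headQ1_bic_iter. Qed.

Lemma exists_full_turn : exists n, (q1_start n == i) && (0 < q1_size n).
Proof.
have [n start_n] : exists n, q1_start n = i.
  apply: (@nat_discrete_ivt _ _ (3 * i)) => [m | ]; first by case/andP: (q1_start_step m).
  by have [sum_3i size_le] := cut_invariant (3 * i); apply/andP; split; [|lia].
have [size0 | size_gt0] := posnP (q1_size n); last by exists n; rewrite start_n eqxx.
by exists n.+1; rewrite /q1_start /q1_size cut_empty_step // -/(q1_start n) start_n eqxx.
Qed.

Lemma bic_stops_within : 1 < i -> exists T, T <= 3 * i /\ bic_stops_after w i T.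
Proof.
move=> i_gt1; have [T /andP [/eqP start_T size_T] T_min] := ex_minnP exists_full_turn.
have [sum_T size_T_le] := cut_invariant T.
have start0_of_head m : m < T -> c0_at_head m -> q1_start m = 0.
  move=> lt_mT /andP [size_m dvd_m].
  have start_le : q1_start m <= i by rewrite -start_T q1_start_mono // ltnW.
  have [start_lt | start_ge] := ltnP (q1_start m) i.
    by case: (q1_start m) start_lt dvd_m => // a a_lt; rewrite gtnNdvd.
  suff : T <= m by lia.
  by apply: T_min; rewrite size_m andbT eqn_leq start_le.
have head_T : c0_at_head T by rewrite /c0_at_head size_T start_T dvdnn.
have not_head_T1 : ~~ c0_at_head T.-1.
  have T1_lt : T.-1 < T by lia.
  apply/negP => /(start0_of_head _ T1_lt) start0; have := q1_start_step T.-1.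
  by rewrite prednK ?start0 ?start_T; lia.
have head_1 : c0_at_head 1.
  by rewrite /c0_at_head /q1_size /q1_start cut_empty_step //= dvdn0.
exists T; split; first by lia.
split; first by rewrite c0_becomes_headE head_T not_head_T1.
rewrite (eq_count (@c0_becomes_headE)); apply: count_rising_edges => //; first by lia.
move=> m /andP [m_gt1 m_lt] /(start0_of_head _ m_lt) start0.
have start_pred0 : q1_start m.-1 = 0.
  by apply/eqP; rewrite -leqn0 -start0 q1_start_mono ?leq_pred.
have [sum_m1 _] := cut_invariant m.-1.
by rewrite /c0_at_head start_pred0 dvdn0 andbT; lia.
Qed.

End BalanceInCycle.

Local Open Scope ring_scope.

Theorem lemma3 :
  exists C : nat,
    forall (R : realDomainType) (i : nat) (w : nat -> R),
      (2 <= i)%N ->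
      (forall j : nat, (j < i)%N -> 0 < w j) ->
      exists T : nat, (T <= C * i)%N /\ bic_stops_after w i T.
Proof.
exists 3%N => R i w i_ge2 w_gt0.
exact: bic_stops_within R i w (ltnW i_ge2) w_gt0 i_ge2.
Qed.
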